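(* Let $w\in\Sigma^n$ and, for each letter $q\in\Sigma$, let $i_q$ be the leftmost position of $w$ with $w[i_q]=q$. Then distinct paths $(v_{p_1},\dots,v_{p_j})$ of the same length $j$ in $\mathrm{NEG}(w)$, each starting at some vertex $v_{i_q}$, correspond to distinct subsequences $w[p_1]\cdots w[p_j]$ of $w$; i.e., every such path corresponds to a unique subsequence of $w$.
   Context: Words are finite sequences over $\Sigma=\{1,\dots,\sigma\}$ with the usual order, $\Sigma$ being the set of letters of $w$. $P_w[i,x]$ denotes the largest $i'\le i$ with $w[i']=x$. The next element graph $\mathrm{NEG}(w)$ is the directed, edge-labelled graph with vertices $v_1,\dots,v_n$ whose edges are pairs $(v_i,v_j)$ with $i<j$ carrying a label: $\uparrow$ if $w[i]<w[j]$ and for all $j'\in[i+1,j-1]$, $w[i]>w[j']$ or $w[j']>w[j]$; $\rightarrow$ if $w[i]=w[j]$ and $i=P_w[j-1,w[j]]$; $\downarrow$ if $w[i]>w[j]$ and for all $j'\in[i+1,j-1]$, $w[i]<w[j']$ or $w[j']<w[j]$. A path $(v_{p_1},\dots,v_{p_j})$ corresponds to the subsequence $w[p_1]\cdots w[p_j]$. *)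

From mathcomp Require Import all_boot.
Set Implicit Arguments. Unset Strict Implicit. Unset Printing Implicit Defensive.

(* Words are sequences of letters (nat, ordered by <=); positions are
   0-indexed: w[i] = nth 0 w i for i < size w.  Vertex v_i is position i. *)

Definition letter (w : seq nat) (i : nat) : nat := nth 0 w i.

Definition isP (w : seq nat) (i x k : nat) : Prop :=
  k <= i /\ letter w k = x /\ (forall k', k < k' <= i -> letter w k' <> x).

Definition edge_up (w : seq nat) (i j : nat) : Prop :=
  letter w i < letter w j /\
  (forall j', i < j' < j -> letter w i > letter w j' \/ letter w j' > letter w j).

Definition edge_right (w : seq nat) (i j : nat) : Prop :=
  letter w i = letter w j /\ isP w j.-1 (letter w j) i.

Definition edge_down (w : seq nat) (i j : nat) : Prop :=
  letter w i > letter w j /\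
  (forall j', i < j' < j -> letter w i < letter w j' \/ letter w j' < letter w j).

Definition neg_edge (w : seq nat) (i j : nat) : Prop :=
  i < j < size w /\ (edge_up w i j \/ edge_right w i j \/ edge_down w i j).

Definition neg_path (w : seq nat) (p : seq nat) : Prop :=
  0 < size p /\ (forall k, k < size p -> nth 0 p k < size w) /\
  (forall k, k.+1 < size p -> neg_edge w (nth 0 p k) (nth 0 p k.+1)).

Definition first_pos (w : seq nat) (q : nat) : nat := index q w.

Definition starts_at_first (w : seq nat) (p : seq nat) : Prop :=
  exists q, q \in w /\ nth 0 p 0 = first_pos w q.

Definition path_word (w : seq nat) (p : seq nat) : seq nat := map (letter w) p.

From mathcomp Require Import all_boot.
From mathcomp Require Import zify.

Set Implicit Arguments.
Unset Strict Implicit.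
Unset Printing Implicit Defensive.

(* An edge of NEG(w) from v_i to a vertex carrying letter a always ends at the
   first occurrence of a after position i: for the labels up and down the
   betweenness condition excludes a strictly between the endpoints, and for
   the label right this is the definition of P_w.  Hence a path is determined
   by its first vertex and its word, and a first vertex of the form v_{i_q}
   is determined by its letter q. *)

Lemma neg_edge_lt w i j : neg_edge w i j -> i < j.
Proof. by case=> /andP[]. Qed.

Lemma neg_edge_target_fresh w i j k :
  neg_edge w i j -> i < k < j -> letter w k <> letter w j.
Proof.
case=> _ [[lt_ij between]|[[_ [_ [_ lastP]]]|[gt_ij between]]] /andP[ik kj] eq_k.
- by case: (between k); rewrite ?ik ?kj // eq_k; lia.
- by apply: (lastP k) => //; rewrite ik; lia.
- by case: (between k); rewrite ?ik ?kj // eq_k; lia.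
Qed.

Lemma neg_edge_inj w i j j' :
  neg_edge w i j -> neg_edge w i j' -> letter w j = letter w j' -> j = j'.
Proof.
move=> e e' eq_j; have ij := neg_edge_lt e; have ij' := neg_edge_lt e'.
case: (ltngtP j j') => // [lt_jj'|lt_j'j].
- by case: (neg_edge_target_fresh e' (k := j)); rewrite ?ij.
- by case: (neg_edge_target_fresh e (k := j')); rewrite ?ij'.
Qed.

Lemma letter_first_pos w q : q \in w -> letter w (first_pos w q) = q.
Proof. exact: nth_index. Qed.

Lemma starts_at_first_inj w p1 p2 :
  starts_at_first w p1 -> starts_at_first w p2 ->
  letter w (nth 0 p1 0) = letter w (nth 0 p2 0) -> nth 0 p1 0 = nth 0 p2 0.
Proof.
move=> [q1 [q1w ->]] [q2 [q2w ->]].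
by rewrite !letter_first_pos // => ->.
Qed.

Lemma neg_path_inj w p1 p2 :
  neg_path w p1 -> neg_path w p2 -> nth 0 p1 0 = nth 0 p2 0 ->
  path_word w p1 = path_word w p2 -> p1 = p2.
Proof.
move=> [_ [_ path1]] [_ [_ path2]] eq_head eq_word.
have eq_size : size p1 = size p2 by have := congr1 size eq_word; rewrite !size_map.
have eq_letter k : k < size p1 -> letter w (nth 0 p1 k) = letter w (nth 0 p2 k).
  by move=> lt_k; rewrite -!(nth_map 0 0) -?eq_size //; congr nth.
apply: (eq_from_nth (x0 := 0)) => // k; elim: k => [_ | k IHk lt_k]; first exact: eq_head.
apply: neg_edge_inj (path1 k lt_k) _ (eq_letter _ lt_k).
by rewrite IHk ?(ltnW lt_k) //; apply: path2; rewrite -eq_size.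
Qed.

Theorem lemma18 (sigma : nat) (w : seq nat)
  (hSigma : forall x, (x \in w) = (1 <= x <= sigma))
  (p1 p2 : seq nat) :
  neg_path w p1 -> neg_path w p2 ->
  starts_at_first w p1 -> starts_at_first w p2 ->
  size p1 = size p2 ->
  p1 <> p2 ->
  path_word w p1 <> path_word w p2.
Proof.
move=> path1 path2 start1 start2 _ ne_p eq_word; apply: ne_p.
have eq_head_letter : letter w (nth 0 p1 0) = letter w (nth 0 p2 0).
  have := congr1 (nth 0 ^~ 0) eq_word; rewrite /path_word !(nth_map 0) //.
  - by case: path2.
  - by case: path1.
exact: neg_path_inj path1 path2 (starts_at_first_inj start1 start2 eq_head_letter) eq_word.
Qed.
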